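(* For any complex numbers $a,b,\alpha,\beta$ with $\beta a-\alpha b\neq0$ and any natural number $n\ge1$, \[ \sum_{r=0}^{\lfloor n/2\rfloor}\Psi\left(\begin{array}{cc|c} a & b & n \\ \alpha & \beta & r \end{array}\right)=\Psi(a-\alpha,b-\beta,n),\qquad \sum_{r=0}^{\lfloor (n-1)/2\rfloor}\Phi\left(\begin{array}{cc|c} a & b & n \\ \alpha & \beta & r \end{array}\right)=\Phi(a-\alpha,b-\beta,n). \]
   Context: $\delta(m)=1$ for $m$ odd, $0$ for $m$ even; $\lfloor\cdot\rfloor$ is the floor. $\Psi(a,b,n)$, $\Phi(a,b,n)$ are defined by $\Psi(a,b,0)=2$, $\Psi(a,b,1)=1$, $\Psi(a,b,n+1)=(2a-b)^{\delta(n)}\Psi(a,b,n)-a\Psi(a,b,n-1)$ and $\Phi(a,b,0)=0$, $\Phi(a,b,1)=1$, $\Phi(a,b,n+1)=(2a-b)^{\delta(n+1)}\Phi(a,b,n)-a\Phi(a,b,n-1)$. For $n\ge1$ and numbers with $\beta a-\alpha b\ne0$, $\Psi\left(\begin{array}{cc|c} a & b & n \\ \alpha & \beta & r \end{array}\right)$ ($0\le r\le\lfloor n/2\rfloor$) and $\Phi\left(\begin{array}{cc|c} a & b & n \\ \alpha & \beta & r \end{array}\right)$ ($0\le r\le\lfloor (n-1)/2\rfloor$) are the unique numbers such that, identically in $x,y$, $(\beta a-\alpha b)^{\lfloor n/2\rfloor}\frac{x^n+y^n}{(x+y)^{\delta(n)}}=\sum_{r}\Psi\left(\begin{array}{cc|c}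 a & b & n \\ \alpha & \beta & r \end{array}\right)(\alpha x^2+\beta xy+\alpha y^2)^{\lfloor n/2\rfloor-r}(ax^2+bxy+ay^2)^r$ and $(\beta a-\alpha b)^{\lfloor (n-1)/2\rfloor}\frac{x^n-y^n}{(x-y)(x+y)^{\delta(n-1)}}=\sum_{r}\Phi\left(\begin{array}{cc|c} a & b & n \\ \alpha & \beta & r \end{array}\right)(\alpha x^2+\beta xy+\alpha y^2)^{\lfloor (n-1)/2\rfloor-r}(ax^2+bxy+ay^2)^r$. *)

From HB Require Import structures.
From mathcomp Require Import all_boot all_order all_algebra.
From mathcomp Require Import complex.
From mathcomp Require Import Rstruct.
From Stdlib Require Import Reals.
Set Implicit Arguments. Unset Strict Implicit. Unset Printing Implicit Defensive.
Import Order.TTheory GRing.Theory Num.Theory.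
Local Open Scope ring_scope.

Notation C := (complex R).

(* delta(m) = odd m (bool coerced to nat), floor(m/2) = m./2 *)

(* (Psi(a,b,n), Psi(a,b,n+1)) *)
Fixpoint Psi_pair (a b : C) (n : nat) : C * C :=
  match n with
  | 0 => (2, 1)
  | n'.+1 => let (p, q) := Psi_pair a b n' in
             (q, (2 * a - b) ^+ (odd n'.+1) * q - a * p)
  end.
Definition Psi (a b : C) (n : nat) : C := (Psi_pair a b n).1.

(* (Phi(a,b,n), Phi(a,b,n+1)) *)
Fixpoint Phi_pair (a b : C) (n : nat) : C * C :=
  match n with
  | 0 => (0, 1)
  | n'.+1 => let (p, q) := Phi_pair a b n' in
             (q, (2 * a - b) ^+ (odd n'.+2) * q - a * p)
  end.
Definition Phi (a b : C) (n : nat) : C := (Phi_pair a b n).1.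

Definition qf (u v : C) (x y : C) : C := u * x ^+ 2 + v * x * y + u * y ^+ 2.

(* c 0, ..., c (n./2) are the numbers Psi[a b n; al be r] : the identity holds
   identically in x, y (as rational functions, i.e. wherever the denominator
   does not vanish). *)
Definition IsPsiCoeffs (a b al be : C) (n : nat) (c : nat -> C) : Prop :=
  forall x y : C, (x + y) ^+ (odd n) != 0 ->
    (be * a - al * b) ^+ (n./2) * ((x ^+ n + y ^+ n) / (x + y) ^+ (odd n))
    = \sum_(r < (n./2).+1)
        c r * qf al be x y ^+ (n./2 - r) * qf a b x y ^+ r.

Definition IsPhiCoeffs (a b al be : C) (n : nat) (c : nat -> C) : Prop :=
  forall x y : C, (x - y) * (x + y) ^+ (odd n.-1) != 0 ->
    (be * a - al * b) ^+ (n.-1./2) *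
      ((x ^+ n - y ^+ n) / ((x - y) * (x + y) ^+ (odd n.-1)))
    = \sum_(r < (n.-1./2).+1)
        c r * qf al be x y ^+ (n.-1./2 - r) * qf a b x y ^+ r.

From HB Require Import structures.
From mathcomp Require Import all_boot all_order all_algebra.
From mathcomp Require Import complex Rstruct ring.
Import Order.TTheory GRing.Theory Num.Theory.

(** Put A = a - al, B = b - be and D = be a - al b.  Over C pick x, l with
    l x = A and l (x + 1)^2 = 2A - B.  Then both quadratic forms take the same
    value t at (x, 1) and l t = D, so the defining identity at (x, 1) reads
    D^k G(x) = t^k (sum of the coefficients), G being its dehomogenised
    left-hand side; hence the sum is l^k G(x).  Now G(y) is the recurrence with
    parameters (2a - b, a) = ((y + 1)^2, y), and multiplying both parameters
    by l turns l^k G(x) into Psi(A, B, n) (resp. Phi(A, B, n)).  The identity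
    is only given where its denominator does not vanish, which may exclude
    x = 1 or x = -1; it extends to every y as both sides are polynomials. *)

Set Implicit Arguments.
Unset Strict Implicit.

Local Open Scope ring_scope.

Lemma nat_ind2 (P : nat -> Prop) :
  P 0 -> P 1 -> (forall n, P n -> P n.+1 -> P n.+2) -> forall n, P n.
Proof.
move=> P0 P1 PSS n; suff: P n /\ P n.+1 by case.
by elim: n => [|n [Pn Pn1]]; split=> //; apply: PSS.
Qed.

Section Recurrences.
Variable R : comNzRingType.
Implicit Types s a x l : R.

(* Psi and Phi as functions of (2a - b, a), over any commutative ring so that
   they can be evaluated at polynomials. *)
Fixpoint psi_pair s a n : R * R :=
  if n is n'.+1 then
    let: (p, q) := psi_pair s a n' in (q, s ^+ odd n'.+1 * q - a * p)
  else (2, 1).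
Definition psi s a n := (psi_pair s a n).1.

Fixpoint phi_pair s a n : R * R :=
  if n is n'.+1 then
    let: (p, q) := phi_pair s a n' in (q, s ^+ odd n'.+2 * q - a * p)
  else (0, 1).
Definition phi s a n := (phi_pair s a n).1.

Lemma psi0 s a : psi s a 0 = 2. Proof. by []. Qed.
Lemma psi1 s a : psi s a 1 = 1. Proof. by []. Qed.
Lemma psiSS s a n : psi s a n.+2 = s ^+ odd n.+1 * psi s a n.+1 - a * psi s a n.
Proof. by rewrite /psi /=; case: (psi_pair s a n). Qed.

Lemma phi0 s a : phi s a 0 = 0. Proof. by []. Qed.
Lemma phi1 s a : phi s a 1 = 1. Proof. by []. Qed.
Lemma phiSS s a n : phi s a n.+2 = s ^+ odd n * phi s a n.+1 - a * phi s a n.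
Proof. by rewrite /phi /= negbK; case: (phi_pair s a n). Qed.

Lemma psi_scale l s a n : l ^+ n./2 * psi s a n = psi (l * s) (l * a) n.
Proof.
elim/nat_ind2: n => [| |n IH0 IH1]; rewrite ?expr0 ?mul1r // !psiSS -IH0 -IH1.
by rewrite /= uphalf_half; case: (odd n); rewrite /= ?add0n !exprS; ring.
Qed.

Lemma phi_scale l s a n : l ^+ n.-1./2 * phi s a n = phi (l * s) (l * a) n.
Proof.
elim/nat_ind2: n => [| |n IH0 IH1]; rewrite ?phi0 ?mulr0 ?expr0 ?mul1r //.
rewrite !phiSS -IH1; case: n IH0 {IH1} => [|n] IH0.
  by rewrite !phi0 !mulr0 !subr0 /= !expr0 !mul1r.
rewrite -IH0 /= uphalf_half; case: (odd n); rewrite /= ?add0n !exprS; ring.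
Qed.

Lemma psi_closed x n : (x + 1) ^+ odd n * psi ((x + 1) ^+ 2) x n = x ^+ n + 1.
Proof.
elim/nat_ind2: n => [| |n IH0 IH1]; first by rewrite psi0 mul1r.
  by rewrite psi1 mulr1.
rewrite psiSS; move: IH0 IH1 => /=.
case: (odd n) => /=; rewrite ?expr0 ?expr1 ?mul1r => IH0 IH1.
- by rewrite mulrBr mulrCA IH0 IH1 !exprS; ring.
- by rewrite expr2 -mulrA IH1 IH0 !exprS; ring.
Qed.

Lemma phi_closed x n :
  (x - 1) * (x + 1) ^+ odd n * phi ((x + 1) ^+ 2) x n.+1 = x ^+ n.+1 - 1.
Proof.
elim/nat_ind2: n => [| |n IH0 IH1]; first by rewrite phi1 !mulr1.
  by rewrite phiSS phi1 phi0 /=; ring.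
rewrite phiSS; move: IH0 IH1 => /=.
set p1 := phi _ _ n.+1; set p2 := phi _ _ n.+2.
case: (odd n) => /=; rewrite ?expr0 ?expr1 ?mulr1 ?mul1r => IH0 IH1.
- by rewrite mulrBr mulrCA IH0 mulrAC IH1 !exprS; ring.
- have -> : (x - 1) * ((x + 1) ^+ 2 * p2 - x * p1) =
            (x + 1) * ((x - 1) * (x + 1) * p2) - x * ((x - 1) * p1) by ring.
  by rewrite IH0 IH1 !exprS; ring.
Qed.

End Recurrences.

Lemma rmorph_psi (R S : comNzRingType) (f : {rmorphism R -> S}) s a n :
  f (psi s a n) = psi (f s) (f a) n.
Proof.
elim/nat_ind2: n => [| |n IH0 IH1]; first by rewrite !psi0 rmorph_nat.
  by rewrite !psi1 rmorph1.
by rewrite !psiSS rmorphB !rmorphM rmorphXn IH0 IH1.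
Qed.

Lemma rmorph_phi (R S : comNzRingType) (f : {rmorphism R -> S}) s a n :
  f (phi s a n) = phi (f s) (f a) n.
Proof.
elim/nat_ind2: n => [| |n IH0 IH1]; first by rewrite !phi0 rmorph0.
  by rewrite !phi1 rmorph1.
by rewrite !phiSS rmorphB !rmorphM rmorphXn IH0 IH1.
Qed.

Lemma Psi_psi a b n : Psi a b n = psi (2 * a - b) a n.
Proof. by rewrite /Psi /psi; congr fst; elim: n => //= n ->. Qed.

Lemma Phi_phi a b n : Phi a b n = phi (2 * a - b) a n.
Proof. by rewrite /Phi /phi; congr fst; elim: n => //= n ->. Qed.

Lemma poly_eq_on_gt1 (R : numDomainType) (p q : {poly R}) :
  (forall x, 1 < x -> p.[x] = q.[x]) -> p = q.
Proof.
move=> Epq; apply/eqP; rewrite -subr_eq0; apply/eqP.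
pose rs := [seq i.+2%:R : R | i <- iota 0 (size (p - q))].
apply: (@roots_geq_poly_eq0 _ _ rs).
- by apply/allP => _ /mapP[i _ ->]; rewrite rootE !hornerE Epq ?subrr // ltr1n.
- by rewrite map_inj_uniq ?iota_uniq // => i j /eqP; rewrite eqr_nat => /eqP [].
- by rewrite size_map size_iota.
Qed.

(* x is a root of A X^2 + B X + A and l = A / x. *)
Lemma exists_scaled_point (F : closedFieldType) (A B : F) :
  exists x l, l * x = A /\ l * (x + 1) ^+ 2 = 2 * A - B.
Proof.
have [->|A_neq0] := eqVneq A 0.
  by exists 0, (- B); rewrite mulr0 add0r expr1n mulr1 mulr0 add0r.
have [x Ex] := @solve_monicpoly F 2%N (nth 0 [:: -1; - (B / A)]) isT.
have {}Ex : x ^+ 2 = -1 - B / A * x.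
  by rewrite Ex !big_ord_recl big_ord0 /=; ring.
have x_neq0 : x != 0.
  apply: contraPneq Ex => ->; rewrite expr0n /= mulr0 subr0 => /eqP.
  by rewrite eq_sym oppr_eq0 oner_eq0.
exists x, (A / x); split; first by rewrite divfK.
have -> : (x + 1) ^+ 2 = x ^+ 2 + 2 * x + 1 by ring.
by rewrite Ex; field; rewrite A_neq0.
Qed.

Definition qf_poly (u v : C) : {poly C} := u *: 'X^2 + v *: 'X + u%:P.

Lemma horner_qf_poly u v x : (qf_poly u v).[x] = qf u v x 1.
Proof.
by rewrite /qf_poly /qf !hornerD !hornerZ hornerXn hornerX hornerC expr1n !mulr1.
Qed.

Lemma sum_coefs_at_common_value (a b al be x l : C) k (c : nat -> C)
    (G : {poly C}) :
  be * a - al * b != 0 ->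
  l * x = a - al -> l * (x + 1) ^+ 2 = 2 * (a - al) - (b - be) ->
  (forall y, 1 < y -> (be * a - al * b) ^+ k * G.[y] =
     \sum_(r < k.+1) c r * qf al be y 1 ^+ (k - r) * qf a b y 1 ^+ r) ->
  \sum_(r < k.+1) c r = l ^+ k * G.[x].
Proof.
set D := be * a - al * b => D_neq0 lx lx1 Ec.
have {}Ec y : D ^+ k * G.[y] =
    \sum_(r < k.+1) c r * qf al be y 1 ^+ (k - r) * qf a b y 1 ^+ r.
  pose rhs :=
    \sum_(r < k.+1) c r *: (qf_poly al be ^+ (k - r) * qf_poly a b ^+ r).
  have horner_rhs z : rhs.[z] =
      \sum_(r < k.+1) c r * qf al be z 1 ^+ (k - r) * qf a b z 1 ^+ r.
    rewrite horner_sum; apply: eq_bigr => r _.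
    by rewrite hornerZ hornerM !horner_exp !horner_qf_poly mulrA.
  have /(congr1 (horner^~ y)) : D ^+ k *: G = rhs.
    by apply: poly_eq_on_gt1 => z z_gt1; rewrite hornerZ Ec // horner_rhs.
  by rewrite hornerZ horner_rhs.
set t := qf a b x 1.
have common : qf al be x 1 = t.
  have -> : qf al be x 1 =
      t - ((a - al) * (x + 1) ^+ 2 - (2 * (a - al) - (b - be)) * x).
    by rewrite /t /qf; ring.
  by rewrite -lx1 -lx; ring.
have lt : l * t = D.
  transitivity (a * (l * (x + 1) ^+ 2) + (b - 2 * a) * (l * x)).
    by rewrite /t /qf; ring.
  by rewrite lx lx1 /D; ring.
have t_neq0 : t != 0 by apply: contraNneq D_neq0 => t0; rewrite -lt t0 mulr0.
apply: (mulfI (expf_neq0 k t_neq0)).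
rewrite mulrA -exprMn (mulrC t) lt Ec common mulr_sumr; apply: eq_bigr => r _.
by rewrite -/t -mulrA -exprD subnK ?leq_ord // mulrC.
Qed.

Lemma sum_Psi_coefs (a b al be : C) n (c : nat -> C) :
  be * a - al * b != 0 -> IsPsiCoeffs a b al be n c ->
  \sum_(r < n./2.+1) c r = Psi (a - al) (b - be) n.
Proof.
move=> D_neq0 Hc.
have [x [l [lx lx1]]] := exists_scaled_point (a - al) (b - be).
pose G : {poly C} := psi (('X + 1) ^+ 2) 'X n.
have horner_G y : G.[y] = psi ((y + 1) ^+ 2) y n.
  rewrite -horner_evalE rmorph_psi rmorphXn rmorphD rmorph1 /=.
  by rewrite !horner_evalE hornerX.
rewrite (sum_coefs_at_common_value D_neq0 lx lx1 (G := G)) => [|y y_gt1].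
  by rewrite horner_G psi_scale lx lx1 -Psi_psi.
have y1_gt0 : 0 < y + 1 by rewrite addr_gt0 // (lt_trans ltr01 y_gt1).
have y1_neq0 : (y + 1) ^+ odd n != 0 by rewrite expf_neq0 // lt0r_neq0.
rewrite -(Hc y 1 y1_neq0) expr1n horner_G -(psi_closed y n).
by rewrite (mulrC ((y + 1) ^+ _)) mulfK.
Qed.

Lemma sum_Phi_coefs (a b al be : C) n (c : nat -> C) :
  be * a - al * b != 0 -> IsPhiCoeffs a b al be n.+1 c ->
  \sum_(r < n./2.+1) c r = Phi (a - al) (b - be) n.+1.
Proof.
move=> D_neq0 Hc.
have [x [l [lx lx1]]] := exists_scaled_point (a - al) (b - be).
pose G : {poly C} := phi (('X + 1) ^+ 2) 'X n.+1.
have horner_G y : G.[y] = phi ((y + 1) ^+ 2) y n.+1.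
  rewrite -horner_evalE rmorph_phi rmorphXn rmorphD rmorph1 /=.
  by rewrite !horner_evalE hornerX.
rewrite (sum_coefs_at_common_value D_neq0 lx lx1 (G := G)) => [|y y_gt1].
  by rewrite horner_G (phi_scale l _ _ n.+1) lx lx1 -Phi_phi.
have y1_gt0 : 0 < y + 1 by rewrite addr_gt0 // (lt_trans ltr01 y_gt1).
have y1_neq0 : (y - 1) * (y + 1) ^+ odd n != 0.
  by rewrite mulf_neq0 ?expf_neq0 ?lt0r_neq0 // subr_gt0.
rewrite -(Hc y 1 y1_neq0) /= expr1n horner_G -(phi_closed y n).
by rewrite (mulrC ((y - 1) * _)) mulfK.
Qed.

Theorem theorem10p3 (a b al be : C) (n : nat) :
  be * a - al * b != 0 -> (1 <= n)%N ->
  (forall c : nat -> C, IsPsiCoeffs a b al be n c ->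
     \sum_(r < (n./2).+1) c r = Psi (a - al) (b - be) n) /\
  (forall c : nat -> C, IsPhiCoeffs a b al be n c ->
     \sum_(r < (n.-1./2).+1) c r = Phi (a - al) (b - be) n).
Proof.
move=> D_neq0; case: n => // n _.
by split=> c; [apply: sum_Psi_coefs | apply: sum_Phi_coefs].
Qed.
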